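(* Let $K$ be a number field, let $\alpha>1$ be rational, and let $F\in K[[x^{\mathbb{R}}]]$ be a Hahn series satisfying $\sum_{i=0}^d P_i(x)F(x^{\alpha^i})=0$ for some polynomials $P_0,\dots,P_d\in K[x]$ with $P_d\ne0$. Then there is a positive integer $l$ such that $P(F(x^l))\subseteq\mathbb{Z}[\alpha,\alpha^{-1}]$; moreover $F(x^l)$ is again such an $\alpha$-Mahler Hahn series.
   Context: $K[[x^{\mathbb{R}}]]$ is the field of Hahn series $\sum_{i\in\mathbb{R}} f_ix^i$ ($f_i\in K$) with well-ordered support $P(F)=\{i:f_i\ne0\}$; $F(x^\gamma)=\sum_if_ix^{\gamma i}$. $\mathbb{Z}[\alpha,\alpha^{-1}]$ is the subring of $\mathbb{Q}$ generated by $\alpha^{\pm1}$. ''$\alpha$-Mahler'' means satisfying a nontrivial homogeneous equation $\sum_{i=0}^{d'} Q_i(x)G(x^{\alpha^i})=0$ with $Q_i\in K[x]$, $Q_{d'}\neq 0$. *)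

From HB Require Import structures.
From mathcomp Require Import all_boot all_order all_algebra all_field.
From mathcomp Require Import reals.
Set Implicit Arguments. Unset Strict Implicit. Unset Printing Implicit Defensive.
Import Order.TTheory GRing.Theory Num.Theory.
Local Open Scope ring_scope.

(* A (generalized) series sum_{e in R} f e x^e is represented by its
   coefficient function f : R -> K. *)

Definition is_hahn (R : realType) (K : ringType) (f : R -> K) : Prop :=
  forall S : R -> Prop,
    (forall e, S e -> f e != 0) -> (exists e, S e) ->
    exists m, S m /\ forall e, S e -> m <= e.

Definition hsupp (R : realType) (K : ringType) (f : R -> K) : R -> Prop :=
  fun e => f e != 0.

(* F(x^g) for g > 0: sum_i f_i x^{g i}, whose coefficient at e is f (e/g). *)
Definition hsubst (R : realType) (K : ringType) (f : R -> K) (g : R) : R -> K :=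
  fun e => f (e / g).

Definition hpolymul (R : realType) (K : ringType) (P : {poly K}) (f : R -> K)
  : R -> K :=
  fun e => \sum_(k < size P) P`_k * f (e - k%:R).

Definition mahler_eq (R : realType) (K : ringType) (alpha : rat) (f : R -> K)
  (d : nat) (P : 'I_d.+1 -> {poly K}) : Prop :=
  P ord_max != 0 /\
  forall e : R,
    \sum_(i < d.+1) hpolymul (P i) (hsubst f (ratr alpha ^+ i)) e = 0.

Definition is_mahler (R : realType) (K : ringType) (alpha : rat) (f : R -> K)
  : Prop :=
  exists d (P : 'I_d.+1 -> {poly K}), mahler_eq alpha f P.

Definition in_Zalpha (R : realType) (alpha : rat) (e : R) : Prop :=
  exists s : seq (int * int),
    e = ratr (\sum_(p <- s) p.1%:~R * alpha ^ p.2).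

(* Write alpha = p/q and L = prod_(n=1..d) (p^n - q^n).  Suppose some
   exponent of F lies outside L^-1 Z[alpha, alpha^-1]; as the support is well
   ordered there is a least such exponent m.  Among the monomials x^k of the P_i
   choose one minimising k + alpha^i m, and read the Mahler equation at that
   exponent.  A term x^k' F(x^(alpha^j)) sees F at the point t with
   k' + alpha^j t = k + alpha^i m.  If t < m, then t is not an exponent, or a
   good one, and a good t would make m good.  If t = m with j <> i, then
   m = (k - k') / (alpha^i (alpha^(j-i) - 1)), and L / (alpha^(j-i) - 1) is an
   integer, so m is good again.  Hence only the chosen term survives, and its
   coefficient times F(m) cannot vanish.  Finally x |-> x^|L| clears the
   denominator and turns the equation for F into one for F(x^|L|), with
   coefficients P_i(x^|L|). *)

From HB Require Import structures.
From mathcomp Require Import all_boot all_order all_algebra all_field.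
From mathcomp Require Import reals.
From mathcomp Require Import ring lra.
From Stdlib Require Import Classical_Prop.
Import Order.TTheory GRing.Theory Num.Theory.
Local Open Scope ring_scope.
Set Implicit Arguments. Unset Strict Implicit. Unset Printing Implicit Defensive.

Definition Zalpha (alpha x : rat) : Prop :=
  exists s : seq (int * int), x = \sum_(p <- s) p.1%:~R * alpha ^ p.2.

Section Zalpha.
Variable alpha : rat.

Lemma Zalpha_int (z : int) : Zalpha alpha z%:~R.
Proof. by exists [:: (z, 0)]; rewrite big_seq1 /= expr0z mulr1. Qed.

Lemma Zalpha_add x y : Zalpha alpha x -> Zalpha alpha y -> Zalpha alpha (x + y).
Proof. by move=> [s ->] [t ->]; exists (s ++ t); rewrite big_cat. Qed.

Lemma Zalpha_opp x : Zalpha alpha x -> Zalpha alpha (- x).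
Proof.
move=> [s ->]; exists [seq (- p.1, p.2) | p <- s].
by rewrite big_map -sumrN; apply: eq_bigr => p _; rewrite mulrNz mulNr.
Qed.

Lemma Zalpha_mulXz x (z : int) :
  alpha != 0 -> Zalpha alpha x -> Zalpha alpha (x * alpha ^ z).
Proof.
move=> alpha_neq0 [s ->]; exists [seq (p.1, p.2 + z) | p <- s].
by rewrite big_map big_distrl; apply: eq_bigr => p _; rewrite expfzDr // mulrA.
Qed.

End Zalpha.

Definition in_Zalpha_over (R : realType) (alpha : rat) (L : int) (e : R) : Prop :=
  exists r : rat, e = ratr r /\ Zalpha alpha (L%:~R * r).

Section ZalphaOver.
Variables (R : realType) (alpha : rat) (L : int).
Hypothesis alpha_neq0 : alpha != 0.

Lemma in_Zalpha_over_shift (e : R) (i k : nat) :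
  in_Zalpha_over alpha L e -> in_Zalpha_over alpha L (e * ratr alpha ^+ i + k%:R).
Proof.
move=> [r [-> Lr]]; exists (r * alpha ^+ i + k%:R).
split; first by rewrite rmorphD rmorphM rmorphXn rmorph_nat.
rewrite mulrDr mulrA pmulrn -intrM.
by apply: Zalpha_add; [exact: (Zalpha_mulXz i) | exact: Zalpha_int].
Qed.

Lemma in_Zalpha_over_unshift (e : R) (i k : nat) :
  in_Zalpha_over alpha L e -> in_Zalpha_over alpha L ((e - k%:R) / ratr alpha ^+ i).
Proof.
move=> [r [-> Lr]]; exists ((r - k%:R) / alpha ^+ i).
split; first by rewrite fmorph_div rmorphB rmorphXn rmorph_nat.
rewrite mulrA mulrBr exprnN; apply: Zalpha_mulXz => //.
apply: Zalpha_add => //; apply: Zalpha_opp.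
by rewrite pmulrn -intrM; apply: Zalpha_int.
Qed.

End ZalphaOver.

Lemma in_Zalpha_of_over (R : realType) (alpha : rat) (l : nat) (e : R) :
  (0 < l)%N -> in_Zalpha_over alpha l (e / l%:R) -> in_Zalpha alpha e.
Proof.
move=> l_gt0 [r [e_r [s Lr]]]; exists s; rewrite -Lr rmorphM rmorph_nat /= -e_r.
by rewrite mulrC divfK // pnatr_eq0 -lt0n.
Qed.

Definition mahler_denom (alpha : rat) (d : nat) : int :=
  \prod_(n < d) (numq alpha ^+ n.+1 - denq alpha ^+ n.+1).

Section MahlerDenom.
Variables (alpha : rat) (d : nat).
Hypothesis alpha_gt1 : 1 < alpha.

Lemma denq_lt_numq : denq alpha < numq alpha.
Proof.
move: alpha_gt1; rewrite -[alpha in 1 < alpha]divq_num_den.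
by rewrite ltr_pdivlMr ?ltr0z ?denq_gt0 // mul1r ltr_int.
Qed.

Lemma mahler_denom_gt0 : 0 < mahler_denom alpha d.
Proof.
by apply: prodr_gt0 => n _; rewrite subr_gt0 ltrXn2r ?denq_lt_numq // ltW.
Qed.

Lemma mahler_denom_dvd n : (0 < n <= d)%N ->
  exists z : int, (mahler_denom alpha d)%:~R = z%:~R * (alpha ^+ n - 1).
Proof.
case/andP=> n_gt0 n_le_d; have n1_lt_d : (n.-1 < d)%N by rewrite prednK.
set p := numq alpha; set q := denq alpha.
set M := \prod_(j < d | j != Ordinal n1_lt_d) (p ^+ j.+1 - q ^+ j.+1).
have q_neq0 : q%:~R != 0 :> rat by rewrite intr_eq0 gt_eqF ?denq_gt0.
have alpha_pq : alpha ^+ n - 1 = (p ^+ n - q ^+ n)%:~R / q%:~R ^+ n.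
  rewrite -[alpha]divq_num_den -/p -/q intrB !rmorphXn /=.
  by rewrite exprMn exprVn mulrBl mulfV ?expf_neq0.
exists (M * q ^+ n).
rewrite /mahler_denom (bigD1 (Ordinal n1_lt_d)) //= prednK // -/M alpha_pq.
rewrite !intrM rmorphXn /= -/p -/q -mulrA [_ ^+ n * _]mulrC.
by rewrite divfK ?expf_neq0 // mulrC.
Qed.

End MahlerDenom.

Lemma in_Zalpha_over_collision (R : realType) (alpha : rat) (d : nat) :
  1 < alpha -> forall (m : R) (i j k k' : nat), (i < j <= d)%N ->
  k%:R + ratr alpha ^+ i * m = k'%:R + ratr alpha ^+ j * m ->
  in_Zalpha_over alpha (mahler_denom alpha d) m.
Proof.
move=> alpha_gt1 m i j k k' /andP[lt_ij le_jd] collide.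
have alpha_neq0 : alpha != 0 by rewrite gt_eqF // (lt_trans ltr01).
have alphaX_neq0 n : alpha ^+ n != 0 by rewrite expf_neq0.
have gap_neq0 : alpha ^+ (j - i) - 1 != 0.
  by rewrite subr_eq0 gt_eqF // exprn_egt1 // subn_eq0 -ltnNge.
have gapR_neq0 : ratr alpha ^+ j - ratr alpha ^+ i != 0 :> R.
  by rewrite -!rmorphXn -rmorphB fmorph_eq0 -(subnKC (ltnW lt_ij)) exprD
    -{2}[alpha ^+ i]mulr1 -mulrBr mulf_neq0.
pose r : rat := (k%:R - k'%:R) / (alpha ^+ j - alpha ^+ i).
have m_r : m = ratr r.
  rewrite /r fmorph_div !rmorphB !rmorph_nat !rmorphXn.
  by apply: (mulIf gapR_neq0); rewrite divfK //; lra.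
have [|z Lz] := @mahler_denom_dvd alpha d (j - i).
  by rewrite subn_gt0 lt_ij (leq_trans (leq_subr _ _)).
exists r; split=> //.
have -> : (mahler_denom alpha d)%:~R * r =
          (z * (k%:Z - k'%:Z))%:~R * alpha ^ (- i%:Z).
  rewrite Lz /r -(subnKC (ltnW lt_ij)) exprD addKn intrM intrB !pmulrn -exprnN.
  field; rewrite alphaX_neq0 /= -{2}[alpha ^+ i]mulr1 -mulrBr.
  by rewrite mulf_neq0.
exact: (Zalpha_mulXz _ alpha_neq0 (Zalpha_int _ _)).
Qed.

Lemma hpolymul_widen (R : realType) (K : nzRingType) (p : {poly K}) (f : R -> K)
    (e : R) (N : nat) :
  (size p <= N)%N -> hpolymul p f e = \sum_(k < N) p`_k * f (e - k%:R).
Proof.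
move=> le_pN.
rewrite /hpolymul (big_ord_widen _ (fun k => p`_k * f (e - k%:R)) le_pN).
rewrite big_mkcond; apply: eq_bigr => k _; case: ltnP => // le_pk.
by rewrite nth_default ?mul0r.
Qed.

Section MahlerSupport.
Variables (R : realType) (K : idomainType) (a : R) (d : nat).
Variables (P : 'I_d.+1 -> {poly K}) (F : R -> K) (G : R -> Prop).
Hypotheses (a_gt1 : 1 < a) (hahnF : is_hahn F) (Pd_neq0 : P ord_max != 0).
Hypothesis mahlerF :
  forall e, \sum_(i < d.+1) hpolymul (P i) (hsubst F (a ^+ i)) e = 0.
Hypothesis G_shift : forall e (i k : nat), G e -> G (e * a ^+ i + k%:R).
Hypothesis G_unshift : forall e (i k : nat), G e -> G ((e - k%:R) / a ^+ i).
Hypothesis G_collision : forall {m} {i j k k' : nat},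
  (i < j <= d)%N -> k%:R + a ^+ i * m = k'%:R + a ^+ j * m -> G m.

Let aX_gt0 i : 0 < a ^+ i.
Proof. by rewrite exprn_gt0 // (lt_trans ltr01). Qed.

Let aX_neq0 i : a ^+ i != 0.
Proof. by rewrite gt_eqF. Qed.

Section MinimalCounterexample.
Variable m : R.
Hypotheses (Fm_neq0 : F m != 0) (notGm : ~ G m).
Hypothesis m_min : forall e, F e != 0 -> ~ G e -> m <= e.

(* The exponent at which the monomial [x^k] of [P_i] meets [m] in
   [x^k F(x^(a^i))]. *)
Let exponent (i : nat) (k : nat) := k%:R + a ^+ i * m.

Let exponentK i k : (exponent i k - k%:R) / a ^+ i = m.
Proof. by rewrite /exponent [k%:R + _]addrC addrK mulrC mulKf. Qed.

Lemma exponent_inj (i i' : 'I_d.+1) (k k' : nat) :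
  exponent i k = exponent i' k' -> i = i' /\ k = k'.
Proof.
rewrite /exponent => eq_exp.
case: (ltngtP i i') => [lt_ii'|lt_i'i|/val_inj eq_ii'].
- exfalso; apply: notGm; apply: (G_collision _ eq_exp).
  by rewrite lt_ii' -ltnS ltn_ord.
- exfalso; apply: notGm; apply: (G_collision _ (esym eq_exp)).
  by rewrite lt_i'i -ltnS ltn_ord.
- by move: eq_exp; rewrite eq_ii' => /addIr/eqP; rewrite eqr_nat => /eqP.
Qed.

Lemma exponent_le_of_term (i0 i : 'I_d.+1) (k0 k : nat) :
  F ((exponent i0 k0 - k%:R) / a ^+ i) != 0 -> exponent i k <= exponent i0 k0.
Proof.
set t := (_ / _) => Ft_neq0; rewrite leNgt; apply/negP => lt_exp.
have lt_tm : t < m by rewrite ltr_pdivrMr // ltrBlDl mulrC.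
have Gt : G t by apply: NNPP => notGt; move: lt_tm; rewrite ltNge m_min.
have := G_unshift i0 k0 (G_shift i k Gt).
by rewrite /t divfK // subrK exponentK.
Qed.

Lemma minimal_counterexample_absurd : False.
Proof.
pose N := \max_(i < d.+1) size (P i).
have le_PN i : (size (P i) <= N)%N.
  exact: (leq_bigmax (F := fun i => size (P i))).
pose coef (x : 'I_d.+1 * 'I_N) := (P x.1)`_x.2.
pose coef_neq0 x := coef x != 0.
pose w (x : 'I_d.+1 * 'I_N) := exponent x.1 x.2.
have lead_lt : ((size (P ord_max)).-1 < N)%N.
  by rewrite prednK ?le_PN // size_poly_gt0.
have lead_neq0 : coef_neq0 (ord_max, Ordinal lead_lt).
  by rewrite /coef_neq0 /coef /= -lead_coefE lead_coef_eq0.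
(* At the least exponent [w (i0, k0)] every other term of the equation
   vanishes. *)
case: (arg_minP w lead_neq0) => -[i0 k0] coef0_neq0 w_min.
have := mahlerF (w (i0, k0)).
under eq_bigr do rewrite (hpolymul_widen _ _ (le_PN _)).
rewrite pair_bigA /hsubst (bigD1 (i0, k0)) //= big1 => [|[i k] /= neq_ik].
  by rewrite addr0 exponentK; apply/eqP; rewrite mulf_neq0.
have [->|coef_ik_neq0] := eqVneq (P i)`_k 0; first by rewrite mul0r.
have [->|Fterm_neq0] := eqVneq (F ((w (i0, k0) - k%:R) / a ^+ i)) 0.
  by rewrite mulr0.
have [eq_i eq_k] : i = i0 /\ (k : nat) = k0.
  apply: exponent_inj; apply/eqP.
  by rewrite eq_le (exponent_le_of_term Fterm_neq0) (w_min (i, k) coef_ik_neq0).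
by move: neq_ik; rewrite eq_i (val_inj eq_k) eqxx.
Qed.

End MinimalCounterexample.

Theorem mahler_support_closed e : F e != 0 -> G e.
Proof.
move=> Fe_neq0; apply: NNPP => notGe.
have [m [[Fm_neq0 notGm] m_min]] := @hahnF (fun e => F e != 0 /\ ~ G e)
  (fun _ => @proj1 _ _) (ex_intro _ e (conj Fe_neq0 notGe)).
apply: (minimal_counterexample_absurd Fm_neq0 notGm) => e' Fe' notGe'.
exact: m_min.
Qed.

End MahlerSupport.

Lemma sum_ord_dvd (V : nmodType) (n l : nat) (g : nat -> V) : (0 < l)%N ->
  \sum_(k < n * l) (if (l %| k)%N then g (k %/ l)%N else 0) = \sum_(j < n) g j.
Proof.
move=> l_gt0; rewrite -(big_mkord xpredT g).
rewrite -(big_mkord xpredT (fun k => if (l %| k)%N then g (k %/ l)%N else 0)).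
rewrite big_nat_mul; apply: eq_bigr => j _.
rewrite big_ltn ?ltn_pmul2r // dvdn_mull // mulnK // big1_seq => [|k].
  exact: addr0.
rewrite andTb mem_index_iota => /andP[lt_jl_k lt_k_jl_l].
case: ifP => // /dvdnP[q def_k]; move: lt_jl_k lt_k_jl_l.
by rewrite def_k !ltn_pmul2r // ltnS => /leq_trans le_qj /le_qj; rewrite ltnn.
Qed.

Section HahnSubst.
Variables (R : realType) (K : nzRingType).

Lemma is_hahn_hsubst (f : R -> K) (g : R) :
  0 < g -> is_hahn f -> is_hahn (hsubst f g).
Proof.
move=> g_gt0 hahn_f S S_supp [e Se].
have g_neq0 : g != 0 by rewrite gt_eqF.
have Sg_supp t : S (t * g) -> f t != 0 by move/S_supp; rewrite /hsubst mulfK.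
have [|m [Smg m_min]] := hahn_f _ Sg_supp; first by exists (e / g); rewrite divfK.
exists (m * g); split=> // t St.
by rewrite -(divfK g_neq0 t) ler_pM2r // m_min ?divfK.
Qed.

Lemma hsubstC (f : R -> K) (g h : R) :
  hsubst (hsubst f g) h =1 hsubst (hsubst f h) g.
Proof. by move=> e; rewrite /hsubst mulrAC. Qed.

Lemma eq_hpolymul (p : {poly K}) (f f' : R -> K) :
  f =1 f' -> hpolymul p f =1 hpolymul p f'.
Proof. by move=> eq_f e; apply: eq_bigr => k _; rewrite eq_f. Qed.

Lemma hpolymul_comp_Xn (p : {poly K}) (f : R -> K) (l : nat) (e : R) :
  (0 < l)%N ->
  hpolymul (p \Po 'X^l) (hsubst f l%:R) e = hpolymul p f (e / l%:R).
Proof.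
move=> l_gt0; have l_neq0 : l%:R != 0 :> R by rewrite pnatr_eq0 -lt0n.
rewrite (hpolymul_widen _ _ (_ : _ <= size p * l)%N); last first.
  by rewrite comp_poly_Xn // size_poly.
rewrite /hpolymul.
rewrite -(@sum_ord_dvd _ _ _ (fun j => p`_j * f (e / l%:R - j%:R)) l_gt0).
apply: eq_bigr => k _; rewrite coef_comp_poly_Xn //.
case: dvdnP => [[q ->]|_]; last by rewrite mul0r.
by rewrite mulnK // /hsubst natrM mulrBl mulfK.
Qed.

Lemma mahler_eq_hsubst (alpha : rat) (f : R -> K) (d : nat)
    (P : 'I_d.+1 -> {poly K}) (l : nat) : (0 < l)%N ->
  mahler_eq alpha f P -> mahler_eq alpha (hsubst f l%:R) (fun i => P i \Po 'X^l).
Proof.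
move=> l_gt0 [Pd_neq0 mahler_f]; split.
  have lead_comp : (P ord_max \Po 'X^l)`_((size (P ord_max)).-1 * l) =
                   lead_coef (P ord_max).
    by rewrite coef_comp_poly_Xn ?dvdn_mull // mulnK.
  rewrite -lead_coef_eq0 in Pd_neq0; apply: contraNneq Pd_neq0 => /= comp_eq0.
  by rewrite -lead_comp comp_eq0 coef0.
move=> e; rewrite -[RHS](mahler_f (e / l%:R)); apply: eq_bigr => i _.
by rewrite (eq_hpolymul _ (hsubstC _ _ _)) hpolymul_comp_Xn.
Qed.

End HahnSubst.

Theorem mainTheorem9 (R : realType) (K : fieldExtType rat) (alpha : rat)
  (F : R -> K) (d : nat) (P : 'I_d.+1 -> {poly K}) :
  1 < alpha -> is_hahn F -> mahler_eq alpha F P ->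
  exists l : nat, (0 < l)%N /\
    (forall e, hsupp (hsubst F l%:R) e -> in_Zalpha alpha e) /\
    is_hahn (hsubst F l%:R) /\ is_mahler alpha (hsubst F l%:R).
Proof.
move=> alpha_gt1 hahnF mahlerF; have [Pd_neq0 mahler_F] := mahlerF.
have alpha_neq0 : alpha != 0 by rewrite gt_eqF // (lt_trans ltr01).
have ratr_alpha_gt1 : 1 < ratr alpha :> R by rewrite -(rmorph1 ratr) ltr_rat.
have supp_F e : F e != 0 -> in_Zalpha_over alpha (mahler_denom alpha d) e.
  exact: (mahler_support_closed ratr_alpha_gt1 hahnF Pd_neq0 mahler_F
    (in_Zalpha_over_shift alpha_neq0) (in_Zalpha_over_unshift alpha_neq0)
    (@in_Zalpha_over_collision R alpha d alpha_gt1)).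
set l := `|mahler_denom alpha d|%N.
have denom_l : mahler_denom alpha d = l%:Z.
  by rewrite gez0_abs // ltW // mahler_denom_gt0.
have l_gt0 : (0 < l)%N by rewrite -ltz_nat -denom_l mahler_denom_gt0.
exists l; split=> //; split; last split.
- by move=> e /supp_F; rewrite denom_l; apply: in_Zalpha_of_over.
- by apply: is_hahn_hsubst; rewrite ?ltr0n.
- by exists d, (fun i => P i \Po 'X^l); apply: mahler_eq_hsubst.
Qed.
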